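(* Let $\mathfrak{A}$ be a complete atomic weakly associative relation algebra and $\mathfrak{B}$ its suitable structure. If $\langle u_0,u_1,u_2\rangle\in V(\mathfrak{B})$, then $\langle u_{\pi(0)},u_{\pi(1)},u_{\pi(2)}\rangle\in V(\mathfrak{B})$ for every function $\pi:\{0,1,2\}\to\{0,1,2\}$ that is not a permutation.
   Context: WA: algebras $\langle A,+,\overline{\phantom{x}},;,\breve{\phantom{x}},1'\rangle$ with $x\cdot y=\overline{\overline{x}+\overline{y}}$, $0'=\overline{1'}$, $1=1'+0'$, $0=\overline{1}$, satisfying for all $x,y,z$: $x+y=y+x$; $x+(y+z)=(x+y)+z$; $\overline{\overline{x}+\overline{y}}+\overline{\overline{x}+y}=x$; $((x\cdot 1');1);1=(x\cdot1');1$; $(x+y);z=x;z+y;z$; $x;1'=x$; $\breve{\breve{x}}=x$; $\breve{(x+y)}=\breve{x}+\breve{y}$; $\breve{(x;y)}=\breve{y};\breve{x}$; $\breve{x};\overline{x;y}+\overline{y}=\overline{y}$. Suitable structure $\mathfrak{B}=\langle B,T_\kappa,E_{\kappa\lambda}\rangle_{\kappa,\lambda<3}$: $B=\{s\in{}^3\mathrm{At}(\mathfrak{A}): s_2;s_0\ge s_1\}$; $T_\kappa=\{\langle s,t\rangle\in B\times B:s_\kappa=t_\kappa\}$; $E_{\kappa\kappa}=B$; for distinct $\kappa,\lambda$ with third index $\mu$, $E_{\kappa\lambda}=\{s\in B:s_\mu\le1'\}$. Trails: a $\mathfrak{B}$-trail is $p=\langle t_0,\kappa_0,\dots,t_n,\kappa_n\rangle$,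 $n\in\omega$, $t_i\in B$, $\kappa_i<3$, with $t_i\ne t_{i+1}$ and $\langle t_i,t_{i+1}\rangle\in T_{\kappa_i}$ for $i<n$; it ends at $t_n$. $\mathrm{Tr}(\mathfrak{B})$ = set of trails; $p\lambda=\langle t_0,\kappa_0,\dots,t_n,\lambda\rangle$. $\approx$ is the smallest equivalence relation on $\mathrm{Tr}(\mathfrak{B})$ with (for trails of the displayed forms): (a) $\langle t_0,\kappa_0,\dots,t_i,\lambda,s,\lambda,t_i,\kappa_i,\dots,t_n,\kappa_n\rangle\approx\langle t_0,\kappa_0,\dots,t_i,\kappa_i,\dots,t_n,\kappa_n\rangle$; (b) $\langle t_0,\kappa_0,\dots,t_n,\lambda,s,\nu\rangle\approx\langle t_0,\kappa_0,\dots,t_n,\nu\rangle$ if $\lambda\ne\nu$; (c) $\langle t_0,\kappa_0,\dots,t_n,\lambda\rangle\approx\langle t_0,\kappa_0,\dots,t_n,\kappa_n\rangle$ if $t_n\in E_{\lambda\kappa_n}$. $p^{\mathfrak{B}}$ = $\approx$-class of $p$; $V(\mathfrak{B})=\{\langle(p0)^{\mathfrak{B}},(p1)^{\mathfrak{B}},(p2)^{\mathfrak{B}}\rangle:p\in\mathrm{Tr}(\mathfrak{B})\}$. *)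

From Stdlib Require Import List Relations.
Import ListNotations.
Set Implicit Arguments.

Record WA := mkWA {
  car :> Type;
  wplus : car -> car -> car;
  wcompl : car -> car;
  wcomp : car -> car -> car;
  wconv : car -> car;
  wone' : car;
  wmul := fun x y => wcompl (wplus (wcompl x) (wcompl y));
  wzero' := wcompl wone';
  wone := wplus wone' wzero';
  wzero := wcompl wone;
  ax_comm : forall x y, wplus x y = wplus y x;
  ax_assoc : forall x y z, wplus x (wplus y z) = wplus (wplus x y) z;
  ax_huntington : forall x y,
    wplus (wcompl (wplus (wcompl x) (wcompl y)))
          (wcompl (wplus (wcompl x) y)) = x;
  ax_wassoc : forall x,
    wcomp (wcomp (wmul x wone') wone) wone = wcomp (wmul x wone') wone;
  ax_distr : forall x y z, wcomp (wplus x y) z = wplus (wcomp x z) (wcomp y z);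
  ax_ident : forall x, wcomp x wone' = x;
  ax_convconv : forall x, wconv (wconv x) = x;
  ax_convplus : forall x y, wconv (wplus x y) = wplus (wconv x) (wconv y);
  ax_convcomp : forall x y, wconv (wcomp x y) = wcomp (wconv y) (wconv x);
  ax_tarski : forall x y,
    wplus (wcomp (wconv x) (wcompl (wcomp x y))) (wcompl y) = wcompl y
}.

Section WAdefs.
Variable A : WA.

Definition wle (x y : A) : Prop := wplus A x y = y.

Definition is_atom (a : A) : Prop :=
  a <> wzero A /\ forall x, wle x a -> x = wzero A \/ x = a.

Definition WA_atomic : Prop :=
  forall x : A, x <> wzero A -> exists a, is_atom a /\ wle a x.

Definition WA_complete : Prop :=
  forall S : A -> Prop, exists s : A,
    (forall x, S x -> wle x s) /\ (forall y, (forall x, S x -> wle x y) -> wle s y).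

Inductive i3 := i0 | i1 | i2.

Definition third (k l : i3) : i3 :=
  match k, l with
  | i0, i1 | i1, i0 => i2
  | i0, i2 | i2, i0 => i1
  | _, _ => i0
  end.

Definition sel (s : A * A * A) (k : i3) : A :=
  match s with (s0, s1, s2) =>
    match k with i0 => s0 | i1 => s1 | i2 => s2 end end.

Definition Bprop (s : A * A * A) : Prop :=
  is_atom (sel s i0) /\ is_atom (sel s i1) /\ is_atom (sel s i2) /\
  wle (sel s i1) (wcomp A (sel s i2) (sel s i0)).

Definition B := { s : A * A * A | Bprop s }.

Definition Bsel (t : B) (k : i3) : A := sel (proj1_sig t) k.

Definition T (k : i3) (s t : B) : Prop := Bsel s k = Bsel t k.

Definition E (k l : i3) (s : B) : Prop :=
  k = l \/ (k <> l /\ wle (Bsel s (third k l)) (wone' A)).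

Fixpoint trail_ok (l : list (B * i3)) : Prop :=
  match l with
  | [] => True
  | [_] => True
  | (t, k) :: (((t', _) :: _) as rest) => t <> t' /\ T k t t' /\ trail_ok rest
  end.

Definition Trail := { l : list (B * i3) | l <> [] /\ trail_ok l }.

Fixpoint setlast (l : list (B * i3)) (lam : i3) : list (B * i3) :=
  match l with
  | [] => []
  | [(t, _)] => [(t, lam)]
  | x :: rest => x :: setlast rest lam
  end.

Inductive gen_step : list (B * i3) -> list (B * i3) -> Prop :=
  | step_a : forall pre post ti lam s ki,
      gen_step (pre ++ [(ti, lam); (s, lam); (ti, ki)] ++ post)
               (pre ++ [(ti, ki)] ++ post)
  | step_b : forall pre tn lam s nu, lam <> nu ->
      gen_step (pre ++ [(tn, lam); (s, nu)]) (pre ++ [(tn, nu)])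
  | step_c : forall pre tn lam kn, E lam kn tn ->
      gen_step (pre ++ [(tn, lam)]) (pre ++ [(tn, kn)]).

Definition trail_equiv : relation Trail :=
  clos_refl_sym_trans Trail
    (fun p q => gen_step (proj1_sig p) (proj1_sig q)).

Definition cls (p : Trail) : Trail -> Prop := fun q => trail_equiv p q.

Definition V (u : i3 -> (Trail -> Prop)) : Prop :=
  exists p : Trail, forall k : i3, exists q : Trail,
    proj1_sig q = setlast (proj1_sig p) k /\ u k = cls q.

End WAdefs.

Definition is_permutation (f : i3 -> i3) : Prop :=
  exists g : i3 -> i3, (forall x, g (f x) = x) /\ (forall y, f (g y) = y).

(* Let p be a trail ending at t and l <> m.  For an atom a, the cycle law makes a˘;a meet 1',
   and an atom e below both satisfies a;e = a.  Such one-sided identity atoms give an s in B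
   with s_l = t_l whose coordinate third(l,m) is below 1', i.e. s in E_lm.  Appending (s, l)
   to p yields a trail p' with p'k ≈ pk for k <> l by rule (b), and p'l ≈ p'm ≈ pm by rules
   (c) and (b).  So V(B) is closed under replacing the l-th component of a triple by its m-th
   one, and every non-bijective map of {0,1,2} is a composite of such replacements. *)

From Stdlib Require Import List Relations Classical FunctionalExtensionality PropExtensionality.
Import ListNotations.

Set Implicit Arguments.

Section Huntington.

Context {X : Type} {add : X -> X -> X} {compl : X -> X}.
Local Infix "+" := add.
Local Notation "x ^c" := (compl x) (at level 30).
Hypothesis add_comm : forall x y, x + y = y + x.
Hypothesis add_assoc : forall x y z, x + (y + z) = (x + y) + z.
Hypothesis huntington : forall x y, (x ^c + y ^c) ^c + (x ^c + y) ^c = x.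

Lemma compl_involutive x : x ^c ^c = x.
Proof.
  assert (shift : forall a b, a + (a ^c + b) ^c = a + (b ^c ^c + a ^c) ^c).
  { intros a b.
    transitivity ((a ^c + b) ^c + ((a ^c + b ^c) ^c + (b ^c ^c + a ^c) ^c)).
    - rewrite (add_comm (b ^c ^c)), (add_comm ((a ^c + b ^c) ^c)), huntington. apply add_comm.
    - rewrite add_assoc, (add_comm (_ ^c) (_ ^c)), huntington. reflexivity. }
  assert (absorb_swap : forall a b, a + ((a ^c + b) ^c + (b ^c ^c + a) ^c) = a + b ^c).
  { intros a b. rewrite add_assoc, shift, <- add_assoc.
    rewrite huntington. reflexivity. }
  assert (sum_compl : forall a, a ^c + a ^c ^c = a + a ^c).
  { intros a. rewrite <- (absorb_swap (a ^c) (a ^c)).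
    rewrite (add_comm (a ^c ^c) (a ^c)), (add_comm (a ^c ^c ^c) (a ^c)),
      (add_comm ((a ^c + a ^c ^c) ^c)), huntington.
    apply add_comm. }
  assert (compl_sum : forall a, (a + a ^c) ^c + (a + a ^c ^c) ^c = a ^c).
  { intros a. rewrite <- sum_compl, (add_comm (a ^c) (a ^c ^c)), (add_comm a (a ^c ^c)).
    apply huntington. }
  rewrite <- (compl_sum (x ^c)), add_comm. apply huntington.
Qed.

Lemma add_compl_invariant x y : x + x ^c = y + y ^c.
Proof.
  pose proof (huntington x y) as Hx. pose proof (huntington (x ^c) y) as Hxc.
  pose proof (huntington y x) as Hy. pose proof (huntington (y ^c) x) as Hyc.
  rewrite compl_involutive in Hxc, Hyc.
  rewrite (add_comm (y ^c) (x ^c)), (add_comm (y ^c) x) in Hy.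
  rewrite (add_comm y (x ^c)), (add_comm y x) in Hyc.
  transitivity (((x ^c + y ^c) ^c + (x ^c + y) ^c) + ((x + y ^c) ^c + (x + y) ^c)).
  { rewrite Hx, Hxc. reflexivity. }
  transitivity (((x ^c + y ^c) ^c + (x + y ^c) ^c) + ((x ^c + y) ^c + (x + y) ^c)).
  2: { rewrite Hy, Hyc. reflexivity. }
  rewrite <- !add_assoc. f_equal. rewrite !add_assoc. f_equal. apply add_comm.
Qed.

Lemma huntington_self x y : (y + y ^c) ^c + (x ^c + x ^c) ^c = x.
Proof. rewrite (add_compl_invariant y (x ^c)). apply huntington. Qed.

Lemma top_add x y : (y + y ^c) + x = y + y ^c.
Proof.
  set (w := y + y ^c).
  assert (Hw : forall z, z + z ^c = w) by (intros z; apply add_compl_invariant).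
  assert (Hz : forall z, (z ^c + z ^c) + z = w).
  { intros z. transitivity ((z ^c + z ^c) + (w ^c + (z ^c + z ^c) ^c)).
    - unfold w. rewrite huntington_self. reflexivity.
    - rewrite add_assoc, (add_comm _ (w ^c)), <- add_assoc, Hw, add_comm. apply Hw. }
  assert (Hc : forall z, w + z ^c = w).
  { intros z. rewrite <- (Hw z) at 1. rewrite <- add_assoc, add_comm. apply Hz. }
  rewrite <- (compl_involutive x). apply Hc.
Qed.

Lemma bottom_add x y : (y + y ^c) ^c + x = x.
Proof.
  set (o := (y + y ^c) ^c).
  assert (Ho : o + o = o).
  { assert (Hoc : (o ^c + o ^c) ^c = o).
    { unfold o. rewrite compl_involutive, top_add. reflexivity. }
    rewrite <- Hoc at 2. apply huntington_self. }
  rewrite <- (huntington_self x y). fold o. rewrite add_assoc, Ho. reflexivity.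
Qed.

Lemma add_idem x : x + x = x.
Proof.
  assert (H : (x + x) ^c = x ^c).
  { rewrite <- (huntington_self (x ^c) x), bottom_add, !compl_involutive. reflexivity. }
  rewrite <- (compl_involutive (x + x)), H. apply compl_involutive.
Qed.

Lemma add_absorb x y : x + (x ^c + y) ^c = x.
Proof.
  rewrite <- (huntington x y) at 1. rewrite <- add_assoc, add_idem. apply huntington.
Qed.

End Huntington.

Section RelationAlgebra.

Variable A : WA.
Local Notation "x + y" := (wplus A x y).
Local Notation "x * y" := (wmul A x y).
Local Notation "x ^c" := (wcompl A x) (at level 30).
Local Notation "x ;; y" := (wcomp A x y) (at level 40, left associativity).
Local Notation "x ^v" := (wconv A x) (at level 30).
Local Notation "x <= y" := (wle A x y).

Lemma wcompl_involutive (x : A) : x ^c ^c = x.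
Proof. exact (compl_involutive (ax_comm A) (ax_assoc A) (ax_huntington A) x). Qed.

Lemma wplus_compl (x : A) : x + x ^c = wone A.
Proof. exact (add_compl_invariant (ax_comm A) (ax_assoc A) (ax_huntington A) x (wone' A)). Qed.

Lemma wzero_plus (x : A) : wzero A + x = x.
Proof. exact (bottom_add (ax_comm A) (ax_assoc A) (ax_huntington A) x (wone' A)). Qed.

Lemma wplus_idem (x : A) : x + x = x.
Proof. exact (add_idem (ax_comm A) (ax_assoc A) (ax_huntington A) x). Qed.

Lemma wplus_absorb (x y : A) : x + (x ^c + y) ^c = x.
Proof. exact (add_absorb (ax_comm A) (ax_assoc A) (ax_huntington A) x y). Qed.

Lemma le_refl (x : A) : x <= x.
Proof. apply wplus_idem. Qed.

Lemma le_trans (x y z : A) : x <= y -> y <= z -> x <= z.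
Proof. unfold wle. intros Hxy Hyz. rewrite <- Hyz, ax_assoc, Hxy. reflexivity. Qed.

Lemma le_antisym (x y : A) : x <= y -> y <= x -> x = y.
Proof. unfold wle. intros Hxy Hyx. rewrite <- Hxy, <- Hyx at 1. apply ax_comm. Qed.

Lemma le_join (x y z : A) : x <= z -> y <= z -> x + y <= z.
Proof. unfold wle. intros Hx Hy. rewrite <- ax_assoc, Hy, Hx. reflexivity. Qed.

Lemma compl_antitone (x y : A) : x <= y -> y ^c <= x ^c.
Proof.
  unfold wle. intros Hxy. rewrite <- Hxy, ax_comm. rewrite <- (wcompl_involutive x) at 2.
  apply wplus_absorb.
Qed.

Lemma zero_le (x : A) : wzero A <= x.
Proof. apply wzero_plus. Qed.

Lemma le_zero (x : A) : x <= wzero A -> x = wzero A.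
Proof. intros H. apply le_antisym; [exact H | apply zero_le]. Qed.

Lemma meet_comm (x y : A) : x * y = y * x.
Proof. unfold wmul. rewrite ax_comm. reflexivity. Qed.

Lemma meet_le_l (x y : A) : x * y <= x.
Proof. unfold wle, wmul. rewrite ax_comm. apply wplus_absorb. Qed.

Lemma meet_le_r (x y : A) : x * y <= y.
Proof. rewrite meet_comm. apply meet_le_l. Qed.

Lemma meet_glb (x y z : A) : z <= x -> z <= y -> z <= x * y.
Proof.
  intros Hx Hy. rewrite <- (wcompl_involutive z). unfold wmul.
  apply compl_antitone, le_join; apply compl_antitone; assumption.
Qed.

Lemma meet_idem (x : A) : x * x = x.
Proof. unfold wmul. rewrite wplus_idem. apply wcompl_involutive. Qed.

Lemma meet_zero (x : A) : wzero A * x = wzero A.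
Proof. apply le_zero, meet_le_l. Qed.

Lemma meet_eq_zero_le_compl (x y : A) : x * y = wzero A -> x <= y ^c.
Proof.
  intros H.
  assert (Hsplit : x * y + x * y ^c = x).
  { unfold wmul. rewrite wcompl_involutive. apply ax_huntington. }
  rewrite H, wzero_plus in Hsplit. rewrite <- Hsplit. apply meet_le_r.
Qed.

Lemma le_compl_meet_eq_zero (x y : A) : x <= y ^c -> x * y = wzero A.
Proof.
  intros H. apply le_zero, le_trans with (y ^c * y).
  - apply meet_glb; [eapply le_trans; [apply meet_le_l | exact H] | apply meet_le_r].
  - unfold wmul. rewrite wcompl_involutive, wplus_compl. apply le_refl.
Qed.

Lemma conv_mono (x y : A) : x <= y -> x ^v <= y ^v.
Proof. unfold wle. intros H. rewrite <- ax_convplus, H. reflexivity. Qed.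

Lemma conv_zero : (wzero A) ^v = wzero A.
Proof.
  apply le_zero. rewrite <- (ax_convconv A (wzero A)) at 2. apply conv_mono, zero_le.
Qed.

Lemma conv_one' : (wone' A) ^v = wone' A.
Proof.
  pose proof (ax_ident A ((wone' A) ^v)) as H.
  rewrite <- (ax_convconv A (wone' A)) at 2. rewrite <- H at 2.
  rewrite ax_convcomp, !ax_convconv. symmetry. exact H.
Qed.

Lemma comp_distr_l (x y z : A) : z ;; (x + y) = z ;; x + z ;; y.
Proof.
  rewrite <- (ax_convconv A (z ;; (x + y))), ax_convcomp, ax_convplus, ax_distr,
    <- !ax_convcomp, <- ax_convplus, ax_convconv. reflexivity.
Qed.

Lemma comp_mono_r (x y z : A) : x <= y -> z ;; x <= z ;; y.
Proof. unfold wle. intros H. rewrite <- comp_distr_l, H. reflexivity. Qed.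

Lemma comp_meet_zero_cycle (x y z : A) : (x ;; y) * z = wzero A -> (x ^v ;; z) * y = wzero A.
Proof.
  intros H. rewrite meet_comm in H. apply le_compl_meet_eq_zero.
  eapply le_trans; [apply comp_mono_r, meet_eq_zero_le_compl, H | apply ax_tarski].
Qed.

Lemma atom_conv (a : A) : is_atom A a -> is_atom A (a ^v).
Proof.
  intros [Hnz Hmin]. split.
  - intros Hz. apply Hnz. rewrite <- (ax_convconv A a), Hz. apply conv_zero.
  - intros x Hx. apply conv_mono in Hx. rewrite ax_convconv in Hx.
    destruct (Hmin _ Hx) as [Hx' | Hx']; [left | right];
      rewrite <- (ax_convconv A x), Hx'; [apply conv_zero | reflexivity].
Qed.

Hypothesis A_atomic : WA_atomic A.

Lemma atom_domain_identity (a : A) : is_atom A a ->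
  exists e, is_atom A e /\ e <= wone' A /\ e <= a ^v ;; a.
Proof.
  intros Ha.
  destruct (@A_atomic ((a ^v ;; a) * wone' A)) as [e [He Hle]].
  - intros Hz. apply comp_meet_zero_cycle in Hz.
    rewrite ax_convconv, ax_ident, meet_idem in Hz. exact (proj1 Ha Hz).
  - exists e. split; [exact He | split; eapply le_trans; eauto using meet_le_l, meet_le_r].
Qed.

Lemma atom_right_identity (a : A) : is_atom A a ->
  exists e, is_atom A e /\ e <= wone' A /\ a ;; e = a.
Proof.
  intros Ha. destruct (atom_domain_identity Ha) as [e [He [He1 Hea]]].
  exists e. split; [exact He | split; [exact He1 |]].
  assert (Hle : a ;; e <= a) by (rewrite <- (ax_ident A a) at 2; apply comp_mono_r, He1).
  destruct (proj2 Ha _ Hle) as [Hae | Hae]; [exfalso | exact Hae].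
  assert (Hz : (a ;; e) * a = wzero A) by (rewrite Hae; apply meet_zero).
  apply comp_meet_zero_cycle in Hz.
  apply (proj1 He), le_zero. rewrite <- Hz. apply meet_glb; [exact Hea | apply le_refl].
Qed.

Lemma atom_left_identity (a : A) : is_atom A a ->
  exists e, is_atom A e /\ e <= wone' A /\ e ;; a = a.
Proof.
  intros Ha. destruct (atom_right_identity (atom_conv Ha)) as [e [He [He1 Hae]]].
  exists (e ^v). split; [apply atom_conv, He |]. split.
  - rewrite <- conv_one'. apply conv_mono, He1.
  - rewrite <- (ax_convconv A a) at 2. rewrite <- Hae, ax_convcomp, ax_convconv. reflexivity.
Qed.

Lemma Bprop_left_unit (a : A) : is_atom A a ->
  exists e, e <= wone' A /\ Bprop A (a, a, e).
Proof.
  intros Ha. destruct (atom_left_identity Ha) as [e [He [He1 Hea]]].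
  exists e. split; [exact He1 |]. refine (conj Ha (conj Ha (conj He _))). cbn.
  rewrite Hea. apply le_refl.
Qed.

Lemma Bprop_right_unit (a : A) : is_atom A a ->
  exists e, e <= wone' A /\ Bprop A (e, a, a).
Proof.
  intros Ha. destruct (atom_right_identity Ha) as [e [He [He1 Hae]]].
  exists e. split; [exact He1 |]. refine (conj He (conj Ha (conj Ha _))). cbn.
  rewrite Hae. apply le_refl.
Qed.

Lemma Bprop_middle_unit (a : A) : is_atom A a ->
  exists e, e <= wone' A /\ Bprop A (a, e, a ^v).
Proof.
  intros Ha. destruct (atom_domain_identity Ha) as [e [He [He1 Hea]]].
  exists e. split; [exact He1 |]. exact (conj Ha (conj He (conj (atom_conv Ha) Hea))).
Qed.

Lemma exists_E_neighbour (t : B A) (l m : i3) : l <> m ->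
  exists s : B A, Bsel s l = Bsel t l /\ E l m s.
Proof.
  intros Hlm. destruct t as [[[t0 t1] t2] Ht]. pose proof Ht as [H0 [H1 [H2 _]]].
  destruct l, m; try (exfalso; apply Hlm; reflexivity).
  - destruct (Bprop_left_unit H0) as [e [He Hs]].
    exists (exist _ _ Hs). split; [reflexivity | right; split; assumption].
  - destruct (Bprop_middle_unit H0) as [e [He Hs]].
    exists (exist _ _ Hs). split; [reflexivity | right; split; assumption].
  - destruct (Bprop_left_unit H1) as [e [He Hs]].
    exists (exist _ _ Hs). split; [reflexivity | right; split; assumption].
  - destruct (Bprop_right_unit H1) as [e [He Hs]].
    exists (exist _ _ Hs). split; [reflexivity | right; split; assumption].
  - destruct (Bprop_middle_unit (atom_conv H2)) as [e [He Hs]].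
    exists (exist _ _ Hs). split; [apply ax_convconv | right; split; assumption].
  - destruct (Bprop_right_unit H2) as [e [He Hs]].
    exists (exist _ _ Hs). split; [reflexivity | right; split; assumption].
Qed.

End RelationAlgebra.

Definition i3_eq_dec (x y : i3) : {x = y} + {x <> y}.
Proof. decide equality. Defined.

Definition collapse (l m k : i3) : i3 := if i3_eq_dec k l then m else k.

Lemma collapse_same (l m : i3) : collapse l m l = m.
Proof. unfold collapse. destruct (i3_eq_dec l l); congruence. Qed.

Lemma collapse_other (l m k : i3) : k <> l -> collapse l m k = k.
Proof. unfold collapse. destruct (i3_eq_dec k l); congruence. Qed.

Definition collapses (w : list (i3 * i3)) : i3 -> i3 :=
  fold_right (fun c f k => f (collapse (fst c) (snd c) k)) (fun k => k) w.

Ltac for_each_collapse tac :=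
  first [ tac (i0, i1) | tac (i0, i2) | tac (i1, i0) | tac (i1, i2) | tac (i2, i0) | tac (i2, i1) ].

Ltac collapse_word_is w :=
  exists w; split; [repeat constructor; discriminate | intros []; cbn; assumption].

(* Exhaustive check of the 27 maps: a bijection is refuted by its inverse, every other map
   is found as a composite of at most three collapses. *)
Lemma non_permutation_collapses (pi : i3 -> i3) : ~ is_permutation pi ->
  exists w, Forall (fun c => fst c <> snd c) w /\ forall k, pi k = collapses w k.
Proof.
  intros Hnp.
  destruct (pi i0) eqn:E0, (pi i1) eqn:E1, (pi i2) eqn:E2;
    first
      [ exfalso; apply Hnp;
        exists (fun y => if i3_eq_dec y (pi i0) then i0
                         else if i3_eq_dec y (pi i1) then i1 else i2);
        split; intros []; rewrite ?E0, ?E1, ?E2; cbn; rewrite ?E0, ?E1, ?E2; reflexivity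
      | for_each_collapse ltac:(fun c => collapse_word_is [c])
      | for_each_collapse ltac:(fun c => for_each_collapse ltac:(fun d => collapse_word_is [c; d]))
      | for_each_collapse ltac:(fun c => for_each_collapse ltac:(fun d =>
          for_each_collapse ltac:(fun e => collapse_word_is [c; d; e]))) ].
Qed.

Section Trails.

Variable A : WA.

Lemma setlast_snoc (pre : list (B A * i3)) (t : B A) (k lam : i3) :
  setlast (pre ++ [(t, k)]) lam = pre ++ [(t, lam)].
Proof.
  induction pre as [| x pre IH]; [reflexivity |].
  destruct pre as [| y pre']; [destruct x; reflexivity |].
  change (setlast (x :: ((y :: pre') ++ [(t, k)])) lam = x :: ((y :: pre') ++ [(t, lam)])).
  rewrite <- IH. destruct x; reflexivity.
Qed.

Lemma trail_ok_retag (pre : list (B A * i3)) (t : B A) (k k' : i3) :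
  trail_ok (pre ++ [(t, k)]) -> trail_ok (pre ++ [(t, k')]).
Proof.
  induction pre as [| [x kx] [| [y ky] pre'] IH]; cbn in *; tauto.
Qed.

Lemma trail_ok_extend (pre : list (B A * i3)) (t s : B A) (k k' : i3) :
  trail_ok (pre ++ [(t, k)]) -> t <> s -> T k t s -> trail_ok (pre ++ [(t, k); (s, k')]).
Proof.
  induction pre as [| [x kx] [| [y ky] pre'] IH]; cbn in *; tauto.
Qed.

Lemma setlast_valid (l : list (B A * i3)) (k : i3) :
  l <> [] /\ trail_ok l -> setlast l k <> [] /\ trail_ok (setlast l k).
Proof.
  intros [Hne Hok]. destruct (exists_last Hne) as [pre [[t k0] ->]].
  rewrite setlast_snoc. split; [apply not_eq_sym, app_cons_not_nil | eapply trail_ok_retag, Hok].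
Qed.

Definition retag (p : Trail A) (k : i3) : Trail A :=
  exist _ (setlast (proj1_sig p) k) (setlast_valid k (proj2_sig p)).

Lemma V_of_retag (p : Trail A) (u : i3 -> Trail A -> Prop) :
  (forall k, u k = cls (retag p k)) -> V u.
Proof. intros Hu. exists p. intros k. exists (retag p k). split; [reflexivity | apply Hu]. Qed.

Lemma retag_of_V (u : i3 -> Trail A -> Prop) :
  V u -> exists p : Trail A, forall k, u k = cls (retag p k).
Proof.
  intros [p Hp]. exists p. intros k. destruct (Hp k) as [q [Hq ->]].
  f_equal. destruct q as [lq Hlq]. cbn in Hq. subst lq.
  unfold retag. f_equal. apply proof_irrelevance.
Qed.

Lemma cls_eq (p q : Trail A) : trail_equiv p q -> cls p = cls q.
Proof.
  intros H. apply functional_extensionality. intros r. apply propositional_extensionality.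
  split; intros H';
    [apply rst_trans with p; [apply rst_sym |] | apply rst_trans with q]; assumption.
Qed.

Hypothesis A_atomic : WA_atomic A.

Lemma step_c_after (pre : list (B A * i3)) (x : B A * i3) (t : B A) (lam k : i3) :
  E lam k t -> gen_step (pre ++ [x; (t, lam)]) (pre ++ [x; (t, k)]).
Proof.
  intros HE. pose proof (step_c (pre ++ [x]) HE) as Hc.
  rewrite <- !app_assoc in Hc. exact Hc.
Qed.

Lemma collapse_trail (p : Trail A) (l m : i3) : l <> m ->
  exists p' : Trail A, forall k, trail_equiv (retag p' k) (retag p (collapse l m k)).
Proof.
  intros Hlm. destruct (proj2_sig p) as [Hne Hok].
  destruct (exists_last Hne) as [pre [[t k0] Hp]]. rewrite Hp in Hok.
  assert (Hretag : forall k, proj1_sig (retag p k) = pre ++ [(t, k)])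
    by (intros k; cbn; rewrite Hp; apply setlast_snoc).
  destruct (exists_E_neighbour A_atomic t Hlm) as [s [Hst HsE]].
  (* If s = t it cannot be appended to the trail, but then t itself lies in E l m. *)
  destruct (classic (s = t)) as [-> | Hneq].
  - exists p. intros k. destruct (i3_eq_dec k l) as [-> | Hkl].
    + rewrite collapse_same. apply rst_step. rewrite !Hretag. apply step_c, HsE.
    + rewrite collapse_other by exact Hkl. apply rst_refl.
  - assert (Hvalid : pre ++ [(t, l); (s, l)] <> [] /\ trail_ok (pre ++ [(t, l); (s, l)])).
    { split; [apply not_eq_sym, app_cons_not_nil |].
      apply trail_ok_extend; [eapply trail_ok_retag, Hok | congruence | exact (eq_sym Hst)]. }
    set (p' := exist _ _ Hvalid : Trail A).
    assert (Hretag' : forall k, proj1_sig (retag p' k) = pre ++ [(t, l); (s, k)]).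
    { intros k. pose proof (setlast_snoc (pre ++ [(t, l)]) s l k) as H.
      rewrite <- !app_assoc in H. exact H. }
    exists p'. intros k. destruct (i3_eq_dec k l) as [-> | Hkl].
    + rewrite collapse_same. apply rst_trans with (retag p' m); apply rst_step.
      * rewrite !Hretag'. apply step_c_after, HsE.
      * rewrite Hretag', Hretag. apply step_b, Hlm.
    + rewrite collapse_other by exact Hkl. apply rst_step.
      rewrite Hretag', Hretag. apply step_b. congruence.
Qed.

Lemma V_collapse (u : i3 -> Trail A -> Prop) (l m : i3) : l <> m ->
  V u -> V (fun k => u (collapse l m k)).
Proof.
  intros Hlm HV. destruct (retag_of_V HV) as [p Hp].
  destruct (collapse_trail p Hlm) as [p' Hp'].
  apply V_of_retag with p'. intros k. rewrite Hp. symmetry. apply cls_eq, Hp'.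
Qed.

Lemma V_collapses (w : list (i3 * i3)) : Forall (fun c => fst c <> snd c) w ->
  forall u : i3 -> Trail A -> Prop, V u -> V (fun k => u (collapses w k)).
Proof.
  induction 1 as [| c w' Hc Hw' IH]; intros u HV; [exact HV |].
  exact (V_collapse Hc (IH u HV)).
Qed.

End Trails.

Theorem lemma8 (A : WA) (Hcomplete : WA_complete A) (Hatomic : WA_atomic A)
  (u : i3 -> (Trail A -> Prop)) :
  V u -> forall pi : i3 -> i3, ~ is_permutation pi -> V (fun k => u (pi k)).
Proof.
  intros HV pi Hnp.
  destruct (non_permutation_collapses Hnp) as [w [Hw Hpi]].
  replace (fun k => u (pi k)) with (fun k => u (collapses w k))
    by (apply functional_extensionality; intros k; rewrite Hpi; reflexivity).
  exact (V_collapses Hatomic Hw HV).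
Qed.
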